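(* Let $\mathcal{L}\subseteq\{0,1\}^n$ be a nonempty lattice, i.e. a nonempty set of points closed under coordinatewise minimum and maximum. Then the function $d_{\mathcal{L}}:\{0,1\}^n\to\mathbb{R}$, $d_{\mathcal{L}}(x) = \min_{y\in\mathcal{L}} \|x-y\|_1$, is submodular.
   Context: A function $g:\{0,1\}^n\to\mathbb{R}$ is submodular if $g(x\vee y)+g(x\wedge y)\le g(x)+g(y)$ for all $x,y$, where $\vee,\wedge$ are coordinatewise max and min (equivalently, $g(x+\mathbf{e}_i)-g(x)\ge g(y+\mathbf{e}_i)-g(y)$ whenever $x\le y$, $x_i=y_i=0$). *)

From mathcomp Require Import all_boot all_order all_algebra.
Set Implicit Arguments. Unset Strict Implicit. Unset Printing Implicit Defensive.
Import Order.TTheory GRing.Theory Num.Theory.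

Definition cube (n : nat) := {ffun 'I_n -> bool}.

Definition vjoin n (x y : cube n) : cube n := [ffun i => x i || y i].
Definition vmeet n (x y : cube n) : cube n := [ffun i => x i && y i].

Definition l1dist n (x y : cube n) : nat := #|[set i | x i != y i]|.

Definition is_lattice n (L : {set cube n}) : Prop :=
  forall x y, x \in L -> y \in L -> vjoin x y \in L /\ vmeet x y \in L.

(* d_L(x) = min_{y in L} ||x - y||_1 ; the initial value n is an upper bound
   on every distance, so for nonempty L this is exactly the minimum. *)
Definition distL n (L : {set cube n}) (x : cube n) : nat :=
  \big[minn/n]_(y in L) l1dist x y.

Definition submodular (R : numDomainType) n (g : cube n -> R) : Prop :=
  forall x y, (g (vjoin x y) + g (vmeet x y) <= g x + g y)%R.

From mathcomp Require Import all_boot all_order all_algebra.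
Import Order.TTheory GRing.Theory Num.Theory.

Set Implicit Arguments.
Unset Strict Implicit.
Unset Printing Implicit Defensive.

(* Let a and b be points of L nearest to x and y.  Since L is a lattice,
   a \/ b and a /\ b lie in L, so d_L(x \/ y) + d_L(x /\ y) is at most
   |x \/ y - a \/ b|_1 + |x /\ y - a /\ b|_1, and coordinatewise this sum
   is at most |x - a|_1 + |y - b|_1 = d_L(x) + d_L(y). *)

Lemma l1distE n (x y : cube n) : l1dist x y = \sum_i (x i != y i : nat).
Proof. by rewrite /l1dist -sum1_card big_mkcond; apply: eq_bigr => i _; rewrite inE. Qed.

Lemma l1dist_ub n (x y : cube n) : l1dist x y <= n.
Proof. by rewrite /l1dist -[X in _ <= X]card_ord max_card. Qed.

Lemma l1dist_join_meet n (x y a b : cube n) :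
  l1dist (vjoin x y) (vjoin a b) + l1dist (vmeet x y) (vmeet a b)
  <= l1dist x a + l1dist y b.
Proof.
rewrite !l1distE -!big_split /=; apply: leq_sum => i _.
by rewrite !ffunE; case: (x i); case: (y i); case: (a i); case: (b i).
Qed.

Lemma distL_le n (L : {set cube n}) x y : y \in L -> distL L x <= l1dist x y.
Proof. by move=> yL; exact: (bigmin_le_cond n (fun y => l1dist x y) yL). Qed.

Lemma distL_attained n (L : {set cube n}) x : L != set0 ->
  exists2 a, a \in L & distL L x = l1dist x a.
Proof.
case/set0Pn => a0 a0L; rewrite /distL.
have [a aL ->] := eq_bigmin a0 (fun y => y \in L) (fun y => l1dist x y) a0L
  (fun y _ => l1dist_ub x y).
by exists a.
Qed.

Lemma distL_submodular n (L : {set cube n}) x y : L != set0 -> is_lattice L ->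
  distL L (vjoin x y) + distL L (vmeet x y) <= distL L x + distL L y.
Proof.
move=> L_neq0 L_lattice.
have [a aL ->] := distL_attained x L_neq0.
have [b bL ->] := distL_attained y L_neq0.
have [abL_join abL_meet] := L_lattice a b aL bL.
apply: leq_trans (l1dist_join_meet x y a b).
by rewrite leq_add // distL_le.
Qed.

Theorem lemma4 (R : realFieldType) (n : nat) (L : {set cube n}) :
  L != set0 -> is_lattice L ->
  submodular (fun x => ((distL L x)%:R : R)%R).
Proof.
move=> L_neq0 L_lattice x y /=.
by rewrite -!natrD ler_nat distL_submodular.
Qed.
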